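(* Let $R=k[[t^6,t^7,t^{15}]]$ and $x=t^6+t^7$. Then $v(m^3+xR)\not\subseteq v(m^3)\cup v(xR)$; more precisely $22\in v(m^3+xR)$ but $22\notin v(m^3)\cup v(xR)$. Consequently the $m$-adic filtration of $R$ is not essentially divisible with respect to the minimal reduction $(t^6+t^7)R$, although it is essentially divisible with respect to $t^6R$.
   Context: $k$ is a field, $R=k[[t^6,t^7,t^{15}]]\subseteq k[[t]]$ with maximal ideal $m$, $v$ the $t$-adic valuation, and for a nonzero ideal $I$, $v(I)=\{v(a):a\in I,a\ne0\}$. For $a\in R$, $\operatorname{ord}(a)=\max\{i: a\in m^i\}$; for $s\in v(R)$, $\operatorname{vord}(s)=\max\{i: s\in v(m^i)\}$. For $x\in R$ with $v(x)=6$ (the multiplicity), the $m$-adic filtration is essentially divisible with respect to $xR$ if for every $u\in v(xR)$ there is $a\in xR$ with $v(a)=u$ and $\operatorname{ord}(a)=\operatorname{vord}(u)$. *)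

(* Formal power series over a field k are modelled as
   coefficient functions nat -> k. *)
From HB Require Import structures.
From mathcomp Require Import all_boot all_order all_algebra.
Set Implicit Arguments. Unset Strict Implicit. Unset Printing Implicit Defensive.
Import GRing.Theory.
Local Open Scope ring_scope.

Section PS.
Variable k : fieldType.

Definition ps := nat -> k.

Definition ps0 : ps := fun _ => 0.
Definition psadd (f g : ps) : ps := fun n => f n + g n.
Definition psmul (f g : ps) : ps :=
  fun n => \sum_(i < n.+1) f i * g (n - i)%N.
Definition tpow (e : nat) : ps := fun n => if n == e then 1 else 0.

(* v(a) = u : the t-adic valuation of a nonzero series a is u *)
Definition has_val (a : ps) (u : nat) : Prop :=
  a u != 0 /\ forall i, (i < u)%N -> a i = 0.

Definition inS (n : nat) : Prop := exists a b c : nat, n = (6 * a + 7 * b + 15 * c)%N.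

(* R = k[[t^6,t^7,t^15]] : series supported on <6,7,15> *)
Definition inR (f : ps) : Prop := forall n, f n != 0 -> inS n.
Definition inm (f : ps) : Prop := inR f /\ f 0%N = 0.

Inductive idealprod (I J : ps -> Prop) : ps -> Prop :=
| ip_zero : idealprod I J ps0
| ip_add b c s : I b -> J c -> idealprod I J s ->
                 idealprod I J (psadd (psmul b c) s).

Fixpoint mpow (i : nat) : ps -> Prop :=
  match i with
  | 0 => inR
  | i'.+1 => idealprod (mpow i') inm
  end.

Definition prin (x : ps) (a : ps) : Prop := exists c, inR c /\ a = psmul x c.

Definition idealsum (I J : ps -> Prop) (a : ps) : Prop :=
  exists b c, I b /\ J c /\ a = psadd b c.

Definition vset (I : ps -> Prop) (u : nat) : Prop :=
  exists a, I a /\ has_val a u.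

Definition is_max (P : nat -> Prop) (n : nat) : Prop :=
  P n /\ forall i, P i -> (i <= n)%N.

Definition is_ord (a : ps) (n : nat) : Prop := is_max (fun i => mpow i a) n.
Definition is_vord (s : nat) (n : nat) : Prop := is_max (fun i => vset (mpow i) s) n.

Definition ess_divisible (x : ps) : Prop :=
  forall u, vset (prin x) u ->
    exists a, prin x a /\ has_val a u /\
      exists n, is_ord a n /\ is_vord u n.

End PS.

(* Membership in m^i can be read off exponents: every exponent of a series in m^i
   is a sum of at least i of the generators 6, 7, 15 of S, and conversely every
   monomial with such an exponent lies in m^i.  Together with v(fc) = v(f) + v(c)
   this reduces all claims to arithmetic in the semigroup <6, 7, 15>. *)

From Stdlib Require Import Classical FunctionalExtensionality.
From mathcomp Require Import all_boot all_order all_algebra zify.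
Set Implicit Arguments. Unset Strict Implicit. Unset Printing Implicit Defensive.
Import GRing.Theory.
Local Open Scope ring_scope.

Section PowerSeries.
Variable k : fieldType.
Implicit Types (f h a c : ps k) (x y : k).

Definition monomial x (e : nat) : ps k := fun n => if n == e then x else 0.

Lemma tpowE e : tpow k e = monomial 1 e.
Proof. by []. Qed.

Lemma psadd0 f : psadd f (ps0 k) = f.
Proof. by apply: functional_extensionality => n; rewrite /psadd /ps0 addr0. Qed.

Lemma psmulDl f (g : ps k) h : psmul (psadd f g) h = psadd (psmul f h) (psmul g h).
Proof.
apply: functional_extensionality => n.
by rewrite /psmul /psadd -big_split; apply: eq_bigr => i _; rewrite mulrDl.
Qed.

Lemma psmul_monomiall x e f n :
  psmul (monomial x e) f n = if (e <= n)%N then x * f (n - e)%N else 0.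
Proof.
rewrite /psmul /monomial; case: leqP => [le_en | lt_ne].
- rewrite (bigD1 (Ordinal (le_en : (e < n.+1)%N))) //= eqxx big1 ?addr0 // => i ne_ie.
  suff /negbTE -> : nat_of_ord i != e by rewrite mul0r.
  by apply: contraNneq ne_ie => eq_ie; apply/eqP/val_inj.
- rewrite big1 // => i _; suff /negbTE -> : nat_of_ord i != e by rewrite mul0r.
  by apply/eqP => eq_ie; move: (ltn_ord i); rewrite eq_ie; lia.
Qed.

Lemma psmul_monomial x y e g :
  psmul (monomial x e) (monomial y g) = monomial (x * y) (e + g).
Proof.
apply: functional_extensionality => n; rewrite psmul_monomiall /monomial.
case: leqP => le_en; last by case: eqP => // eq_n; lia.
have -> : (n - e == g)%N = (n == e + g)%N.
  by apply/eqP/eqP => ?; lia.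
by case: eqP; rewrite ?mulr0.
Qed.

Lemma psmul_neq0 f (g : ps k) n :
  psmul f g n != 0 -> exists2 j, (j <= n)%N & (f j != 0) && (g (n - j)%N != 0).
Proof.
move=> nz; have /existsP [j nzj] : [exists j : 'I_n.+1, f j * g (n - j)%N != 0].
  apply: contraNT nz => /existsPn all0.
  by rewrite /psmul big1 // => j _; apply/eqP/negPn/all0.
by exists j; [rewrite -ltnS | rewrite -negb_or -mulf_eq0].
Qed.

Lemma has_val_monomial x e : x != 0 -> has_val (monomial x e) e.
Proof.
move=> nzx; split; first by rewrite /monomial eqxx.
by move=> i lt_ie; rewrite /monomial; case: eqP => // eq_ie; lia.
Qed.

Lemma has_val_uniq a u w : has_val a u -> has_val a w -> u = w.
Proof.
move=> [nzu zu] [nzw zw].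
by case: (ltngtP u w) => // lt; [move: nzu; rewrite zw | move: nzw; rewrite zu]; rewrite ?eqxx.
Qed.

Lemma has_val_exists a n : a n != 0 -> exists u, has_val a u.
Proof.
move=> nz; have exP : exists n, a n != 0 by exists n.
case: (ex_minnP exP) => u nzu minu; exists u; split => // i lt_iu.
by apply/eqP; apply: contraTT lt_iu => /minu; rewrite -leqNgt.
Qed.

Lemma has_val_mul f (g : ps k) d w : has_val f d -> has_val g w -> has_val (psmul f g) (d + w).
Proof.
move=> [nzf zf] [nzg zg].
have term0 n (j : 'I_n.+1) : (n <= d + w)%N -> nat_of_ord j != d -> f j * g (n - j)%N = 0.
  move=> le_n ne_jd; case: (ltnP j d) => [lt_jd | le_dj]; first by rewrite zf ?mul0r.
  by rewrite zg ?mulr0 //; move: ne_jd (ltn_ord j) => /eqP; lia.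
split.
- rewrite /psmul (bigD1 (Ordinal (leq_addr w d : (d < (d + w).+1)%N))) //= addKn.
  by rewrite big1 ?addr0 ?mulf_neq0 // => j; apply: term0.
- move=> n lt_n; rewrite /psmul big1 // => j _.
  case: (eqVneq (nat_of_ord j) d) => [eq_jd | ne_jd]; last by apply: term0; lia.
  by rewrite zg ?mulr0 // eq_jd; move: (ltn_ord j); lia.
Qed.

Lemma prin_has_val f d a u : has_val f d -> prin f a -> has_val a u ->
  exists c w, [/\ inR c, a = psmul f c, has_val c w & u = (d + w)%N].
Proof.
move=> vf [c [Rc ->]] va; have [j _ /andP [_ /has_val_exists [w vc]]] := psmul_neq0 va.1.
by exists c, w; split => //; apply: has_val_uniq va (has_val_mul vf vc).
Qed.

Lemma inR_monomial x e : inS e -> inR (monomial x e).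
Proof. by move=> Se n; rewrite /monomial; case: (eqVneq n e) => [-> | _]; rewrite ?eqxx. Qed.

Lemma inm_monomial x e : inS e -> e != 0%N -> inm (monomial x e).
Proof. by move=> Se nz_e; split; [apply: inR_monomial | rewrite /monomial eq_sym (negbTE nz_e)]. Qed.

Lemma mpowS_mul i a c : mpow i a -> inm c -> mpow i.+1 (psmul a c).
Proof. by move=> ia mc; rewrite -(psadd0 (psmul a c)); apply: ip_add => //; apply: ip_zero. Qed.

End PowerSeries.

Definition inSpow (i n : nat) : Prop :=
  exists a b c : nat, (i <= a + b + c)%N /\ n = (6 * a + 7 * b + 15 * c)%N.

Lemma inS_add e g : inS e -> inS g -> inS (e + g).
Proof. by move=> [a [b [c ->]]] [a' [b' [c' ->]]]; exists (a + a')%N, (b + b')%N, (c + c')%N; lia. Qed.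

Lemma inSpow0 n : inSpow 0 n <-> inS n.
Proof. by split=> [[a [b [c [_ ->]]]] | [a [b [c ->]]]]; exists a, b, c. Qed.

Lemma inSpow_add i e g : inSpow i e -> inS g -> g != 0%N -> inSpow i.+1 (e + g).
Proof.
move=> [a [b [c [le_i ->]]]] [a' [b' [c' ->]]] nz_g.
by exists (a + a')%N, (b + b')%N, (c + c')%N; split; lia.
Qed.

Lemma inSpowS i n : inSpow i.+1 n ->
  exists e g, [/\ inSpow i e, inS g, g != 0%N & n = (e + g)%N].
Proof.
move=> [a [b [c [le_i ->]]]].
case: (posnP a) => [a0 | a_gt0].
  case: (posnP b) => [b0 | b_gt0].
    exists (6 * a + 7 * b + 15 * c.-1)%N, 15%N.
    by split; [exists a, b, c.-1; split | exists 0%N, 0%N, 1%N | |]; lia.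
  exists (6 * a + 7 * b.-1 + 15 * c)%N, 7%N.
  by split; [exists a, b.-1, c; split | exists 0%N, 1%N, 0%N | |]; lia.
exists (6 * a.-1 + 7 * b + 15 * c)%N, 6%N.
by split; [exists a.-1, b, c; split | exists 1%N, 0%N, 0%N | |]; lia.
Qed.

Lemma is_max_exists (P : nat -> Prop) B :
  P 0%N -> (forall i, P i -> i <= B)%N -> exists n, is_max P n.
Proof.
move=> P0 bounded; apply: NNPP => no_max.
suff unbounded : forall d, exists2 j, P j & (d <= j)%N.
  by have [j /bounded] := unbounded B.+1; lia.
elim=> [|d [j Pj le_dj]]; first by exists 0%N.
case: (ltnP d j) => [lt_dj | le_jd]; first by exists j.
apply: NNPP => no_j; apply: no_max; exists j; split => // i Pi.
by rewrite leqNgt; apply/negP => lt_ji; apply: no_j; exists i => //; lia.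
Qed.

Lemma is_max_ext (P Q : nat -> Prop) n :
  (forall i, P i <-> Q i) -> is_max P n -> is_max Q n.
Proof. by move=> PQ [Pn maxP]; split=> [|i /PQ /maxP]; first apply/PQ. Qed.

Section Filtration.
Variable k : fieldType.

Lemma mpow_monomial i (x : k) e : inSpow i e -> mpow i (monomial x e).
Proof.
elim: i x e => [|i IH] x e; first by move=> /inSpow0; apply: inR_monomial.
move=> /inSpowS [e' [g [ie' Sg nz_g ->]]].
rewrite -[x]mulr1 -psmul_monomial.
by apply: mpowS_mul; [apply: IH | apply: inm_monomial].
Qed.

Lemma mpow_support i (a : ps k) n : mpow i a -> a n != 0 -> inSpow i n.
Proof.
elim: i a n => [|i IH] a n /=; first by move=> Ra /Ra /inSpow0.
elim=> [|b c s ib mc _ IHs]; first by rewrite /ps0 eqxx.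
rewrite /psadd; case: (eqVneq (s n) 0) => [-> | /IHs //]; rewrite addr0.
move=> /psmul_neq0 [j le_jn /andP [/(IH _ _ ib) ij nz_c]].
have Snj := mc.1 _ nz_c; have nz_nj : (n - j)%N != 0%N.
  by apply: contraNneq nz_c => ->; rewrite mc.2 eqxx.
by rewrite -(subnKC le_jn); apply: inSpow_add.
Qed.

Lemma mpow_tpowE i u : mpow i (tpow k u) <-> inSpow i u.
Proof.
split; last exact: mpow_monomial.
by move=> /mpow_support; apply; rewrite /tpow eqxx oner_neq0.
Qed.

Lemma vset_mpowE i u : vset (@mpow k i) u <-> inSpow i u.
Proof.
split=> [[a [ia [nz_a _]]] | iu]; first exact: mpow_support ia nz_a.
by exists (tpow k u); split; [apply/mpow_tpowE | apply: has_val_monomial; apply: oner_neq0].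
Qed.

Lemma ess_divisible_tpow e : inS e -> ess_divisible (tpow k e).
Proof.
move=> Se u [a [ea va]].
have [c [w [Rc _ [nz_c _] ->]]] := prin_has_val (has_val_monomial e (oner_neq0 k)) ea va.
have Su : inS (e + w) by apply: inS_add => //; apply: Rc.
have [n max_n] : exists n, is_max (inSpow ^~ (e + w)) n.
  apply: is_max_exists (e + w)%N _ _; first exact/inSpow0.
  by move=> i [a' [b' [c' [le_i eq_ew]]]]; lia.
exists (tpow k (e + w)); split; [|split; first exact: has_val_monomial (oner_neq0 k)].
  exists (tpow k w); split; last by rewrite !tpowE psmul_monomial mulr1.
  by apply: inR_monomial; apply: Rc.
by exists n; split; apply: is_max_ext max_n => i; [rewrite mpow_tpowE | rewrite vset_mpowE].
Qed.

Local Notation t6t7 := (psadd (tpow k 6) (tpow k 7)).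

Lemma has_val_t6t7 : has_val t6t7 6.
Proof.
split; first by rewrite /psadd /tpow /= addr0 oner_neq0.
by move=> i lt_i6; rewrite /psadd /tpow !ifN ?addr0 //; lia.
Qed.

Lemma psmul_t6t7 c n : psmul t6t7 c n =
  (if (6 <= n)%N then c (n - 6)%N else 0) + (if (7 <= n)%N then c (n - 7)%N else 0).
Proof. by rewrite psmulDl /psadd !tpowE !psmul_monomiall !mul1r. Qed.

Lemma not_vset_m3_22 : ~ vset (@mpow k 3) 22.
Proof. by move=> /vset_mpowE [a [b [c]]]; lia. Qed.

Lemma not_vset_t6t7R_22 : ~ vset (prin t6t7) 22.
Proof.
move=> [a [xa va]]; have [c [w [Rc _ [nz_c _] eq_w]]] := prin_has_val has_val_t6t7 xa va.
by have [a' [b' [c']]] := Rc _ nz_c; lia.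
Qed.

(* The t^21 term of (t^6 + t^7) t^15 = t^21 + t^22 cancels against -t^21 in m^3. *)
Lemma vset_m3_t6t7R_22 : vset (idealsum (@mpow k 3) (prin t6t7)) 22.
Proof.
exists (tpow k 22); split; last exact: has_val_monomial (oner_neq0 k).
exists (monomial (-1) 21), (psmul t6t7 (tpow k 15)); split; [|split].
- by apply: mpow_monomial; exists 0%N, 3%N, 0%N.
- by exists (tpow k 15); split => //; apply: inR_monomial; exists 0%N, 0%N, 1%N.
- rewrite psmulDl !tpowE !psmul_monomial mulr1.
  apply: functional_extensionality => n; rewrite /psadd /monomial.
  by case: (eqVneq n 21) => [-> /= | _]; rewrite ?addr0 ?addNr ?add0r.
Qed.

(* v((t^6 + t^7) t^22) = 28 = 4 * 7 has vord 4, but any a in (t^6 + t^7)R with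
   v(a) = 28 has a nonzero coefficient at 29, which is not in v(m^4). *)
Lemma not_ess_divisible_t6t7 : ~ ess_divisible t6t7.
Proof.
have v28 : vset (prin t6t7) 28.
  exists (psmul t6t7 (tpow k 22)); split.
    by exists (tpow k 22); split => //; apply: inR_monomial; exists 0%N, 1%N, 1%N.
  exact: has_val_mul has_val_t6t7 (has_val_monomial 22 (oner_neq0 k)).
move=> /(_ 28%N v28) [a [xa [va [n [[na _] [_ max_n]]]]]].
have le4n : (4 <= n)%N by apply: max_n; apply/vset_mpowE; exists 0%N, 4%N, 0%N.
have [c [w [Rc ea [nz_c _] eq_w]]] := prin_has_val has_val_t6t7 xa va.
have w22 : w = 22%N by lia.
subst w; have c23 : c 23%N = 0 by case: (eqVneq (c 23%N) 0) => // /Rc [a' [b' [c']]]; lia.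
have : a 29%N != 0 by rewrite ea psmul_t6t7 /= c23 add0r.
by move=> /(mpow_support na) [a' [b' [c' []]]]; lia.
Qed.

End Filtration.

Theorem mainTheorem10 (k : fieldType) :
  let x := psadd (tpow k 6) (tpow k 7) in
  let I := idealsum (@mpow k 3) (prin x) in
  (~ (forall u, vset I u -> vset (@mpow k 3) u \/ vset (prin x) u)) /\
  vset I 22 /\ ~ vset (@mpow k 3) 22 /\ ~ vset (prin x) 22 /\
  ~ ess_divisible x /\ ess_divisible (tpow k 6).
Proof.
move=> x I.
have v22 : vset I 22 := @vset_m3_t6t7R_22 k.
have m3 := @not_vset_m3_22 k; have xR := @not_vset_t6t7R_22 k.
split; first by move=> /(_ 22%N v22) [].
do !split => //; first exact: not_ess_divisible_t6t7.
by apply: ess_divisible_tpow; exists 1%N, 0%N, 0%N.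
Qed.
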